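(* For every finite simple graph $\Gamma$ on vertex set $V$, $F(P_{B(\Gamma)})=F_\Gamma$. Consequently $F_\Gamma=\sum_{\alpha\models |V|}\zeta_\alpha(\Gamma)M_\alpha$, where $\zeta_\alpha(\Gamma)$ is the number of ordered colorings $\lambda:V\to\{1,\dots,k(\alpha)\}$ that are surjective and have type $\alpha$.
   Context: For a finite simple graph $\Gamma$ on $V$, $B(\Gamma)$ is the collection of nonempty $I\subseteq V$ such that the induced subgraph $\Gamma|_I$ is connected; $P_{B(\Gamma)}=\sum_{I\in B(\Gamma)}\mathrm{Conv}\{e_i:i\in I\}\subset\mathbb{R}^V$ (the graph-associahedron). For a convex polytope $Q\subset\mathbb{R}^V$, $f:V\to\mathbb{N}=\{1,2,\dots\}$ is $Q$-generic if $x\mapsto\sum_v f(v)x_v$ attains its maximum over $Q$ at a unique point, and $F(Q)=\sum_{f\ Q\text{-generic}}\prod_{v}x_{f(v)}$. For a composition $\alpha=(a_1,\dots,a_k)$ of length $k(\alpha)=k$, $M_\alpha=\sum_{i_1<\dots<i_k}x_{i_1}^{a_1}\cdots x_{i_k}^{a_k}$. A coloring is a map $\lambda:V\to\mathbb{N}$; let $i_1<\dots<i_k$ be its values and $I_j=\lambda^{-1}(\{i_1,\dots,i_j\})$, $I_0=\emptyset$. It is ordered if for each $j$, no two distinct vertices $u,w$ with $\lambda(u)=\lambda(w)=i_j$ are joined by a path in $\Gamma$ (possibly a single edge) all of whose internal vertices lie in $I_{j-1}$. Its type is $(|\lambda^{-1}(i_1)|,\dots,|\lambda^{-1}(i_k)|)$.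 $F_\Gamma=\sum_{\lambda\text{ ordered}}\prod_{v\in V}x_{\lambda(v)}$; for the empty graph $F_\Gamma=1$. *)

From HB Require Import structures.
From mathcomp Require Import all_boot all_order all_algebra.
From Stdlib Require Import ClassicalEpsilon.
Set Implicit Arguments. Unset Strict Implicit. Unset Printing Implicit Defensive.
Import Order.TTheory GRing.Theory Num.Theory.

Definition asb (P : Prop) : bool :=
  if excluded_middle_informative P then true else false.

(* A finite simple graph on V is a symmetric irreflexive relation on V. *)

(* Gamma|_I is connected (I nonempty checked separately). *)
Definition induced_connected (V : finType) (G : rel V) (I : {set V}) : bool :=
  [forall x in I, forall y in I,
     connect [rel a b | [&& a \in I, b \in I & G a b]] x y].

Definition building_set (V : finType) (G : rel V) : {set {set V}} :=
  [set I : {set V} | (I != set0) && induced_connected G I].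

Local Open Scope ring_scope.

Definition evec (R : realFieldType) (V : finType) (i : V) : {ffun V -> R} :=
  [ffun j => if j == i then 1 else 0].

Definition conv_simplex (R : realFieldType) (V : finType) (I : {set V})
    (x : {ffun V -> R}) : Prop :=
  exists t : V -> R,
    (forall i, i \in I -> 0 <= t i) /\ \sum_(i in I) t i = 1 /\
    (forall j, x j = \sum_(i in I) t i * evec R i j).

Definition minkowski_sum (R : realFieldType) (V : finType) (B : {set {set V}})
    (Q : {set V} -> {ffun V -> R} -> Prop) (x : {ffun V -> R}) : Prop :=
  exists y : {set V} -> {ffun V -> R},
    (forall I, I \in B -> Q I (y I)) /\ (forall j, x j = \sum_(I in B) y I j).

Definition graph_associahedron (R : realFieldType) (V : finType) (G : rel V)
    : {ffun V -> R} -> Prop :=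
  minkowski_sum (building_set G) (@conv_simplex R V).

Definition generic (R : realFieldType) (V : finType) (Q : {ffun V -> R} -> Prop)
    (f : V -> nat) : Prop :=
  let phi := fun x : {ffun V -> R} => \sum_v (f v)%:R * x v in
  exists x, Q x /\ (forall y, Q y -> phi y <= phi x) /\
            (forall y, Q y -> phi y = phi x -> y = x).

Local Close Scope ring_scope.

Definition content (V : finType) (n : nat) (g : {ffun V -> 'I_n})
    : {ffun 'I_n -> nat} := [ffun i => #|[set v | g v == i]|].

(* qs_coef P n e = coefficient of the monomial x_1^(e 0) ... x_n^(e (n-1)) in
   the series  sum_{f : V -> {1,2,...}, P f} prod_v x_(f v).
   (A function f contributes to such a monomial iff it takes values in
   {1..n}; we encode f v = (g v).+1 with g : V -> 'I_n.)  Two such series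
   are equal iff qs_coef agrees for all n and e. *)
Definition qs_coef (V : finType) (P : (V -> nat) -> Prop) (n : nat)
    (e : {ffun 'I_n -> nat}) : nat :=
  #|[set g : {ffun V -> 'I_n} | asb (P (fun v => (g v).+1)) && (content g == e)]|.

Definition ordered_coloring (V : finType) (G : rel V) (l : V -> nat) : Prop :=
  forall u w : V, u != w -> l u = l w ->
    ~ (exists p : seq V,
         [&& path G u (rcons p w), uniq (u :: rcons p w) &
             all (fun x => l x < l u) p]).

Definition coloring_values (V : finType) (l : V -> nat) : seq nat :=
  sort leq (undup [seq l v | v <- enum V]).

Definition coloring_type (V : finType) (l : V -> nat) : seq nat :=
  [seq #|[set v | l v == c]| | c <- coloring_values l].

Definition zeta (V : finType) (G : rel V) (alpha : seq nat) : nat :=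
  #|[set l : {ffun V -> 'I_(size alpha)} |
      [&& asb (ordered_coloring G (fun v => (l v).+1)),
          [forall j : 'I_(size alpha), [exists v, l v == j]] &
          coloring_type (fun v => (l v).+1) == alpha]]|.

Definition F_graph_coef (V : finType) (G : rel V) (n : nat)
    (e : {ffun 'I_n -> nat}) : nat :=
  @qs_coef V (ordered_coloring G) n e.

Definition F_poly_coef (R : realFieldType) (V : finType)
    (Q : {ffun V -> R} -> Prop) (n : nat) (e : {ffun 'I_n -> nat}) : nat :=
  @qs_coef V (generic Q) n e.

(* coefficient of x_1^(e 0)...x_n^(e (n-1)) in the monomial quasisymmetric
   function M_alpha (alpha a composition, all parts positive) *)
Definition M_coef (alpha : seq nat) (n : nat) (e : {ffun 'I_n -> nat}) : nat :=
  if [seq e i | i <- enum 'I_n & e i != 0] == alpha then 1 else 0.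

Definition is_composition (m : nat) (alpha : seq nat) : bool :=
  all (fun a => 0 < a) alpha && (sumn alpha == m).

(* sum_{alpha |= m} F alpha : every composition of m has length k <= m and
   parts <= m, so it is (map val a) for a unique k < m.+1 and
   a : k.-tuple 'I_m.+1 *)
Definition sum_compositions (m : nat) (F : seq nat -> nat) : nat :=
  \sum_(k < m.+1) \sum_(a : k.-tuple 'I_m.+1 | is_composition m (map val a))
     F (map val a).

(* A linear functional with weights f attains its maximum over the
   simplex Conv{e_i : i in I} exactly on the face spanned by the vertices of I
   of largest weight, and over a Minkowski sum exactly at the sums of maximisers
   of the summands.  Hence f is generic for the graph-associahedron iff f has a
   unique maximum on every connected set I.  That in turn says that f is an
   ordered colouring: the vertices of a forbidden path form a connected set with
   two maxima, and conversely two maxima u, w of a connected set are joined by a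
   simple path inside it, which, cut at its first vertex of colour f u, is a
   forbidden path.
   For the expansion in monomial quasisymmetric functions, a colouring with
   content e is the same as a surjective colouring into {1, ..., k} composed
   with the increasing enumeration of the support of e, and its type is then
   the sequence of nonzero entries of e. *)
From HB Require Import structures.
From mathcomp Require Import all_boot all_order all_algebra.
From Stdlib Require Import ClassicalEpsilon.
Set Implicit Arguments. Unset Strict Implicit. Unset Printing Implicit Defensive.
Import Order.TTheory GRing.Theory Num.Theory.

Lemma asbP (P : Prop) : reflect P (asb P).
Proof. by rewrite /asb; case: excluded_middle_informative => H; constructor. Qed.

Lemma eq_asb (P Q : Prop) : (P <-> Q) -> asb P = asb Q.
Proof. by move=> [PQ QP]; apply/asbP/asbP. Qed.

Section SimplexMaximum.
Variables (R : realFieldType) (V : finType) (f : V -> nat).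
Local Open Scope ring_scope.

Definition fmax (J : {set V}) : nat := (\max_(i in J) f i)%N.
Definition argmax_set (J : {set V}) : {set V} := [set i in J | f i == fmax J].
Definition lin (x : {ffun V -> R}) : R := \sum_v (f v)%:R * x v.
Definition argmax_center (J : {set V}) : {ffun V -> R} :=
  [ffun v => if v \in argmax_set J then #|argmax_set J|%:R^-1 else 0].

Lemma genericP (Q : {ffun V -> R} -> Prop) : generic Q f <->
  exists x, [/\ Q x, forall y, Q y -> lin y <= lin x &
                     forall y, Q y -> lin y = lin x -> y = x].
Proof. by split=> [[x [? []]]|[x []]]; exists x. Qed.

Lemma leq_fmax (J : {set V}) i : i \in J -> (f i <= fmax J)%N.
Proof. exact: leq_bigmax_cond. Qed.

Lemma argmax_set_gt0 (J : {set V}) : J != set0 -> (0 < #|argmax_set J|)%N.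
Proof.
rewrite -card_gt0 => /(eq_bigmax_cond f) [i0 Ji0 max_i0].
by rewrite card_gt0; apply/set0Pn; exists i0; rewrite inE Ji0 /fmax max_i0 eqxx.
Qed.

Lemma lin_evec u : lin (evec R u) = (f u)%:R.
Proof.
rewrite /lin (bigD1 u) //= big1 ?addr0 => [|v vu]; rewrite ffunE.
  by rewrite eqxx mulr1.
by rewrite (negbTE vu) mulr0.
Qed.

Lemma lin_sum (B : {set {set V}}) (y : {set V} -> {ffun V -> R}) :
  lin [ffun v => \sum_(I in B) y I v] = \sum_(I in B) lin (y I).
Proof.
rewrite /lin; under eq_bigr do rewrite ffunE big_distrr.
by rewrite exchange_big.
Qed.

Lemma conv_simplex_evec (J : {set V}) u : u \in J -> conv_simplex J (evec R u).
Proof.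
move=> Ju; exists (fun i => if i == u then 1 else 0); split.
  by move=> i _; case: (i == u).
split.
  by rewrite (bigD1 u) //= eqxx big1 ?addr0 // => i /andP[_ /negbTE ->].
move=> j; rewrite (bigD1 u) //= eqxx mul1r big1 ?addr0 //.
by move=> i /andP[_ /negbTE ->]; rewrite mul0r.
Qed.

Lemma conv_simplex_lin (J : {set V}) x : conv_simplex J x -> exists t : V -> R,
  [/\ forall i, i \in J -> 0 <= t i, \sum_(i in J) t i = 1,
      forall j, x j = \sum_(i in J) t i * evec R i j &
      lin x = \sum_(i in J) t i * (f i)%:R].
Proof.
case=> t [t_ge0 [t_sum1 x_t]]; exists t; split => //.
rewrite /lin; under eq_bigr do rewrite x_t big_distrr /=.
rewrite exchange_big /=; apply: eq_bigr => i Ji.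
rewrite (bigD1 i) //= big1 ?addr0 => [|v vi]; rewrite ffunE.
  by rewrite eqxx mulr1 mulrC.
by rewrite (negbTE vi) !mulr0.
Qed.

Lemma lin_conv_simplex_le (J : {set V}) x :
  conv_simplex J x -> lin x <= (fmax J)%:R.
Proof.
case/conv_simplex_lin => t [t_ge0 t_sum1 _ ->].
have -> : (fmax J)%:R = \sum_(i in J) t i * (fmax J)%:R :> R.
  by rewrite -big_distrl /= t_sum1 mul1r.
apply: ler_sum => i Ji; apply: ler_wpM2l; first exact: t_ge0.
by rewrite ler_nat leq_fmax.
Qed.

Lemma conv_simplex_argmax_center (J : {set V}) :
  J != set0 -> conv_simplex J (argmax_center J).
Proof.
move=> J0; have A_gt0 := argmax_set_gt0 J0.
have AJ i : i \in argmax_set J -> i \in J by rewrite inE => /andP[].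
exists (fun i => if i \in argmax_set J then #|argmax_set J|%:R^-1 else 0); split.
  by move=> i _; case: ifP => // _; rewrite invr_ge0 ler0n.
split.
  rewrite -big_mkcondr /= (eq_bigl (mem (argmax_set J))); last first.
    by move=> i; apply/andP/idP => [[]|Ai] //; split => //; apply: AJ.
  by rewrite sumr_const -(mulr_natr (_^-1)) mulVr // unitfE pnatr_eq0 -lt0n.
move=> j; rewrite ffunE; case: (boolP (j \in J)) => Jj.
  rewrite (bigD1 j) //= ffunE eqxx mulr1 big1 ?addr0 // => i /andP[_ ij].
  by rewrite ffunE eq_sym (negbTE ij) mulr0.
rewrite big1; first by case: ifP => // /AJ; rewrite (negbTE Jj).
move=> i Ji; rewrite ffunE; case: (j =P i) => [ji|_]; last by rewrite mulr0.
by rewrite ji Ji in Jj.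
Qed.

Lemma lin_argmax_center (J : {set V}) :
  J != set0 -> lin (argmax_center J) = (fmax J)%:R.
Proof.
move=> J0; have A_gt0 := argmax_set_gt0 J0.
rewrite /lin (bigID (mem (argmax_set J))) /= [X in _ + X]big1 ?addr0; last first.
  by move=> v /negbTE vA; rewrite ffunE vA mulr0.
rewrite (eq_bigr (fun _ => (fmax J)%:R * #|argmax_set J|%:R^-1)); last first.
  by move=> v vA; rewrite ffunE vA; move: vA; rewrite inE => /andP[_ /eqP->].
rewrite sumr_const -(mulr_natr (_ * _)) -mulrA mulVr ?mulr1 //.
by rewrite unitfE pnatr_eq0 -lt0n.
Qed.

(* A maximiser puts no weight on vertices of non-maximal colour. *)
Lemma conv_simplex_lin_max (J : {set V}) x :
  conv_simplex J x -> lin x = (fmax J)%:R -> #|argmax_set J| = 1%N ->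
  x = argmax_center J.
Proof.
case/conv_simplex_lin => t [t_ge0 t_sum1 x_t ->] lin_x /eqP/cards1P [a A_a].
have aA : a \in argmax_set J by rewrite A_a set11.
have Ja : a \in J by move: aA; rewrite inE => /andP[].
have slack_sum0 : \sum_(i in J) t i * ((fmax J)%:R - (f i)%:R) = 0.
  under eq_bigr do rewrite mulrBr.
  by rewrite sumrB -big_distrl /= t_sum1 mul1r lin_x subrr.
have slack_ge0 i : i \in J -> 0 <= t i * ((fmax J)%:R - (f i)%:R).
  by move=> Ji; rewrite mulr_ge0 ?t_ge0 // subr_ge0 ler_nat leq_fmax.
have t_eq0 i : i \in J -> i != a -> t i = 0.
  move=> Ji ia; have /eqP := psumr_eq0P slack_ge0 slack_sum0 Ji.
  rewrite mulf_eq0 subr_eq0 => /orP[/eqP //|].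
  rewrite eqr_nat eq_sym => fi.
  by move: ia; rewrite -in_set1 -A_a inE Ji fi.
have t_a : t a = 1.
  by rewrite -t_sum1 (bigD1 a) //= big1 ?addr0 // => i /andP[Ji ia]; rewrite t_eq0.
apply/ffunP => j; rewrite x_t !ffunE A_a cards1 invr1 in_set1.
rewrite (bigD1 a) //= big1 ?addr0 => [|i /andP[Ji ia]]; last by rewrite t_eq0 ?mul0r.
by rewrite t_a mul1r ffunE.
Qed.

Lemma minkowski_sumP (B : {set {set V}}) (Q : {set V} -> {ffun V -> R} -> Prop) x :
  minkowski_sum B Q x <-> exists2 y, forall I, I \in B -> Q I (y I) &
    x = [ffun v => \sum_(I in B) y I v].
Proof.
split=> [[y [Qy x_y]]|[y Qy ->]]; exists y => //.
  by apply/ffunP => v; rewrite ffunE.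
by split => // v; rewrite ffunE.
Qed.

Section MinkowskiSimplices.
Variable B : {set {set V}}.
Hypothesis B_neq0 : forall I, I \in B -> I != set0.
Let P := minkowski_sum B (@conv_simplex R V).
Let center := [ffun v => \sum_(I in B) argmax_center I v].
Let top : R := \sum_(I in B) (fmax I)%:R.

Lemma lin_minkowski_le x : P x -> lin x <= top.
Proof.
case/minkowski_sumP => y Qy ->; rewrite lin_sum.
by apply: ler_sum => I BI; apply: lin_conv_simplex_le (Qy I BI).
Qed.

Lemma minkowski_center : P center.
Proof.
apply/minkowski_sumP; exists argmax_center => // I /B_neq0.
exact: conv_simplex_argmax_center.
Qed.

Lemma lin_minkowski_center : lin center = top.
Proof. by rewrite lin_sum; apply: eq_bigr => I /B_neq0/lin_argmax_center. Qed.

(* Varying one summand of the center over the vertices of maximal weight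
   keeps lin at its maximum, so uniqueness forces a single such vertex. *)
Lemma generic_argmax_set1 :
  generic P f -> forall I, I \in B -> #|argmax_set I| = 1%N.
Proof.
case/genericP=> x0 [Px0 lin_le lin_uniq] I BI.
have [a aA] : exists a, a \in argmax_set I.
  by apply/set0Pn; rewrite -card_gt0 argmax_set_gt0 ?B_neq0.
pose z c := [ffun v => \sum_(J in B) (if J == I then evec R c else argmax_center J) v].
have z_x0 c : c \in argmax_set I -> z c = x0.
  rewrite inE => /andP[cI /eqP fc].
  have Pz : P (z c).
    apply/minkowski_sumP.
    exists (fun J => if J == I then evec R c else argmax_center J) => // J BJ.
    case: eqP => [->|_]; first exact: conv_simplex_evec.
    exact/conv_simplex_argmax_center/B_neq0.
  apply: lin_uniq => //; apply/eqP; rewrite eq_le lin_le //=.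
  suff -> : lin (z c) = top by exact: lin_minkowski_le.
  rewrite /z lin_sum; apply: eq_bigr => J BJ.
  case: eqP => [->|_]; first by rewrite lin_evec fc.
  exact/lin_argmax_center/B_neq0.
apply/eqP/cards1P; exists a; apply/setP => u; rewrite in_set1.
apply/idP/eqP => [uA|->//].
have := congr1 (fun x : {ffun V -> R} => x a) (etrans (z_x0 a aA) (esym (z_x0 u uA))).
rewrite !ffunE !(bigD1 I BI) /= eqxx !ffunE eqxx.
under [X in _ + X = _ -> _]eq_bigr => J /andP[_ /negbTE ->] do [].
under [X in _ = _ + X -> _]eq_bigr => J /andP[_ /negbTE ->] do [].
by move/addIr; case: (a =P u) => // _ /eqP; rewrite oner_eq0.
Qed.

Lemma argmax_set1_generic :
  (forall I, I \in B -> #|argmax_set I| = 1%N) -> generic P f.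
Proof.
move=> A1; apply/genericP; exists center.
rewrite lin_minkowski_center; split; [exact: minkowski_center | exact: lin_minkowski_le|].
move=> _ /minkowski_sumP [y Qy ->] lin_y.
suff y_center I : I \in B -> y I = argmax_center I.
  by apply/ffunP => v; rewrite !ffunE; apply: eq_bigr => I /y_center ->.
move=> BI; apply: conv_simplex_lin_max (Qy I BI) _ (A1 I BI).
have slack_sum0 : \sum_(J in B) ((fmax J)%:R - lin (y J)) = 0.
  by rewrite sumrB -lin_sum lin_y subrr.
have slack_ge0 J : J \in B -> 0 <= (fmax J)%:R - lin (y J).
  by move=> BJ; rewrite subr_ge0; apply/lin_conv_simplex_le/Qy.
by have /eqP := psumr_eq0P slack_ge0 slack_sum0 BI; rewrite subr_eq0 eq_sym => /eqP.
Qed.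

End MinkowskiSimplices.
End SimplexMaximum.

Section ConnectedArgmax.
Variables (V : finType) (G : rel V).
Hypothesis Gsym : symmetric G.

Definition induced_rel (I : {set V}) : rel V := [rel a b | [&& a \in I, b \in I & G a b]].

Lemma induced_connected_path u p :
  path G u p -> induced_connected G [set x in u :: p].
Proof.
set I := [set x in u :: p] => Gp.
have from_u x : x \in I -> connect (induced_rel I) u x.
  rewrite inE => xp; apply: (path_connect (p := p)) => //.
  apply: (@sub_in_path _ (fun x => x \in I) G) Gp => [a b aI bI Gab|].
    by apply/and3P.
  by apply/allP => y y_up; rewrite inE.
apply/forallP => x; apply/implyP => xI; apply/forallP => y; apply/implyP => yI.
have induced_sym : symmetric (induced_rel I).
  by move=> a b; rewrite /induced_rel /= Gsym andbCA.
by apply: connect_trans (from_u y yI); rewrite sym_connect_sym ?from_u.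
Qed.

Lemma path_induced_rel (I : {set V}) u p :
  path (induced_rel I) u p -> path G u p && all (fun x => x \in I) p.
Proof.
elim: p u => //= x p IH u /andP[/and3P[_ xI Gux] /IH/andP[-> ->]].
by rewrite Gux xI.
Qed.

Lemma ordered_of_argmax_set1 (f : V -> nat) :
  (forall I, I \in building_set G -> #|argmax_set f I| = 1%N) ->
  ordered_coloring G f.
Proof.
move=> A1 u w uw fuw [p /and3P[Gp _ p_low]].
pose I := [set x in u :: rcons p w].
have uI : u \in I by rewrite inE mem_head.
have wI : w \in I by rewrite inE in_cons mem_rcons mem_head orbT.
have IB : I \in building_set G.
  by rewrite inE induced_connected_path // andbT; apply/set0Pn; exists u.
have fmaxI : fmax f I = f u.
  apply/eqP; rewrite eqn_leq leq_fmax // andbT; apply/bigmax_leqP => x.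
  rewrite inE in_cons mem_rcons in_cons => /or3P[/eqP->//|/eqP->|xp].
    by rewrite fuw.
  exact/ltnW/(allP p_low).
have uA : u \in argmax_set f I by rewrite inE uI fmaxI eqxx.
have wA : w \in argmax_set f I by rewrite inE wI fmaxI fuw eqxx.
have /eqP/cards1P [a A_a] := A1 I IB.
by move: uA wA uw; rewrite A_a !in_set1 => /eqP-> /eqP->; rewrite eqxx.
Qed.

(* Shorten a path from u to w in I and cut it at its first vertex of colour
   f u: the part before it is a forbidden path. *)
Lemma ordered_connect_lt (f : V -> nat) (I : {set V}) u w :
  ordered_coloring G f -> u != w -> connect (induced_rel I) u w ->
  (forall x, x \in I -> f x <= f u) -> f w != f u.
Proof.
move=> ord uw /connectP [p Ip w_last] le_fu; apply/eqP => fw; move: w_last.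
case: (shortenP Ip) => q Iq uq _ w_last; have /andP[Gq qI] := path_induced_rel Iq.
have wq : w \in q.
  by have := mem_last u q; rewrite -w_last in_cons eq_sym (negbTE uw).
have has_top : has (fun x => f x == f u) q by apply/hasP; exists w; rewrite ?fw.
move: Gq uq qI; case: (split_find has_top) => x s1 s2 /eqP fx s1_low Gq uq qI.
apply: (ord u x); last exists s1.
- by apply: contraTneq uq => <-; rewrite /= mem_cat mem_rcons mem_head.
- by [].
apply/and3P; split.
- by move: Gq; rewrite cat_path => /andP[].
- by move: uq; rewrite -cat_cons cat_uniq => /and3P[].
apply/allP => y ys1; rewrite ltn_neqAle (hasPn s1_low y ys1) le_fu //.
by apply: (allP qI); rewrite mem_cat mem_rcons in_cons ys1 orbT.
Qed.

Lemma argmax_set1_of_ordered (f : V -> nat) :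
  ordered_coloring G f ->
  forall I, I \in building_set G -> #|argmax_set f I| = 1%N.
Proof.
move=> ord I; rewrite inE => /andP[I_neq0 I_conn].
have [a aA] : exists a, a \in argmax_set f I.
  by apply/set0Pn; rewrite -card_gt0 argmax_set_gt0.
apply/eqP/cards1P; exists a; apply/setP => w; rewrite in_set1.
apply/idP/eqP => [wA|->//]; apply/eqP; apply: contraT => wa.
move: aA wA; rewrite !inE => /andP[aI /eqP fa] /andP[wI /eqP fw].
have aw : a != w by rewrite eq_sym.
have a_to_w : connect (induced_rel I) a w.
  by move/forallP: I_conn => /(_ a); rewrite aI => /forallP/(_ w); rewrite wI.
have le_fa x : x \in I -> f x <= f a by rewrite fa; apply: leq_fmax.
by have := ordered_connect_lt ord aw a_to_w le_fa; rewrite fw fa eqxx.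
Qed.

Lemma generic_graph_associahedron (R : realFieldType) (f : V -> nat) :
  generic (@graph_associahedron R V G) f <-> ordered_coloring G f.
Proof.
have B_neq0 I : I \in building_set G -> I != set0 by rewrite inE => /andP[].
split=> [/(generic_argmax_set1 B_neq0)|/argmax_set1_of_ordered].
  exact: ordered_of_argmax_set1.
exact: argmax_set1_generic.
Qed.

End ConnectedArgmax.

Section ContentColorings.
Variable V : finType.

Lemma sum_card_fibers k (l : V -> 'I_k) :
  (\sum_(j < k) #|[set v | l v == j]|)%N = #|V|.
Proof.
rewrite -[RHS]sum1_card (partition_big l xpredT) //=; apply: eq_bigr => j _.
by rewrite -sum1_card; apply: eq_bigl => v; rewrite inE.
Qed.

Variable G : rel V.

Lemma ordered_coloring_mono (f h : V -> nat) :
  (forall u w, (f u < f w) = (h u < h w))%N ->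
  ordered_coloring G f -> ordered_coloring G h.
Proof.
move=> lt_fh ord_f u w uw huw [p /and3P[Gp up p_low]]; apply: (ord_f u w uw).
  by case: (ltngtP (f u) (f w)); rewrite // lt_fh huw ltnn.
by exists p; rewrite Gp up; apply: sub_all p_low => x /=; rewrite lt_fh.
Qed.

Section Relabel.
Variables (n k : nat) (sel : 'I_k -> 'I_n).
Hypothesis sel_mono : {mono sel : j j' / (j < j')%N}.

Definition relabel (l : {ffun V -> 'I_k}) : {ffun V -> 'I_n} := [ffun v => sel (l v)].

Lemma sel_inj : injective sel.
Proof.
move=> j j' eq_sel; apply: val_inj.
by case: (ltngtP j j'); rewrite // -sel_mono eq_sel ltnn.
Qed.

Lemma relabel_inj : injective relabel.
Proof.
move=> l1 l2 eq_l; apply/ffunP => v; apply: sel_inj.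
by have := congr1 (fun g : {ffun V -> 'I_n} => g v) eq_l; rewrite /relabel !ffunE.
Qed.

Lemma content_relabel l j : content (relabel l) (sel j) = #|[set v | l v == j]|.
Proof. by rewrite ffunE; apply: eq_card => v; rewrite !inE ffunE (inj_eq sel_inj). Qed.

Lemma content_relabel_out l i : i \notin codom sel -> content (relabel l) i = 0%N.
Proof.
move=> i_out; rewrite ffunE; apply/eqP; rewrite cards_eq0; apply/eqP/setP => v.
by rewrite !inE ffunE; apply: contraNF i_out => /eqP <-; apply: codom_f.
Qed.

Lemma ordered_relabel l :
  ordered_coloring G (fun v => (relabel l v).+1) <->
  ordered_coloring G (fun v => (l v).+1).
Proof. by split; apply: ordered_coloring_mono => u w; rewrite !ffunE !ltnS sel_mono. Qed.

(* A colouring with content e takes values in the support of e, which sel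
   enumerates increasingly, so it is the relabelling of a surjective one. *)
Lemma card_content_colorings (e : {ffun 'I_n -> nat}) :
  (forall i, (e i != 0%N) = (i \in codom sel)) ->
  #|[set g : {ffun V -> 'I_n} |
      asb (ordered_coloring G (fun v => (g v).+1)) && (content g == e)]| =
  #|[set l : {ffun V -> 'I_k} | [&& asb (ordered_coloring G (fun v => (l v).+1)),
       [forall j, [exists v, l v == j]] &
       [forall j, #|[set v | l v == j]| == e (sel j)]]]|.
Proof.
move=> supp_e; rewrite -[RHS](card_imset _ relabel_inj); apply: eq_card => g.
apply/idP/imsetP.
- rewrite inE => /andP[/asbP ord_g /eqP content_g].
  have g_sel v : exists j, g v = sel j.
    apply/codomP; rewrite -supp_e -content_g ffunE -lt0n card_gt0.
    by apply/set0Pn; exists v; rewrite inE.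
  have [l0 g_l0] := fin_all_exists g_sel.
  have g_relabel : g = relabel [ffun v => l0 v].
    by apply/ffunP => v; rewrite !ffunE.
  exists [ffun v => l0 v] => //; rewrite inE g_relabel in ord_g content_g *.
  apply/and3P; split; first exact/asbP/ordered_relabel.
  + apply/forallP => j; have : e (sel j) != 0%N by rewrite supp_e codom_f.
    rewrite -content_g content_relabel -lt0n card_gt0 => /set0Pn [v].
    by rewrite inE => lv; apply/existsP; exists v.
  + by apply/forallP => j; rewrite -content_g content_relabel.
- case=> l; rewrite inE => /and3P[/asbP ord_l _ /forallP fibers_l] ->.
  rewrite inE; apply/andP; split; first exact/asbP/ordered_relabel.
  apply/eqP/ffunP => i; case: (boolP (i \in codom sel)) => [/codomP [j ->]|i_out].
    by rewrite content_relabel (eqP (fibers_l j)).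
  by rewrite content_relabel_out //; apply/esym/eqP/negbNE; rewrite supp_e.
Qed.

End Relabel.
End ContentColorings.

Section Zeta.
Variables (V : finType) (G : rel V).

Lemma coloring_type_surj k (l : {ffun V -> 'I_k}) :
  [forall j, [exists v, l v == j]] ->
  coloring_type (fun v => (l v).+1) = [seq #|[set v | l v == j]| | j <- enum 'I_k].
Proof.
move=> /forallP l_surj.
have values_l : coloring_values (fun v => (l v).+1) = iota 1 k.
  apply: (sorted_eq leq_trans anti_leq); first exact/sort_sorted/leq_total.
    exact: iota_sorted.
  apply: uniq_perm; rewrite ?sort_uniq ?undup_uniq ?iota_uniq // => c.
  rewrite mem_sort mem_undup mem_iota add1n; apply/mapP/idP => [[v _ ->]|].
    by rewrite /= ltnS.
  case: c => //= c; rewrite ltnS => ck.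
  have /existsP [v /eqP lv] := l_surj (Ordinal ck).
  by exists v; rewrite ?mem_enum // lv.
rewrite /coloring_type values_l -[iota 1 k]/(iota (1 + 0) k) iotaDl.
rewrite -val_enum_ord -!map_comp.
by apply: eq_map => j /=; apply: eq_card => v; rewrite !inE add1n eqSS.
Qed.

Lemma zeta_eq0 (a : seq nat) : ~~ is_composition #|V| a -> zeta G a = 0%N.
Proof.
move=> a_ncomp; apply/eqP; rewrite cards_eq0; apply/eqP/setP => l; rewrite !inE.
apply/negbTE/negP => /and3P[_ l_surj /eqP type_l]; move: a_ncomp.
rewrite -type_l coloring_type_surj // /is_composition sumnE big_map big_enum /=.
rewrite sum_card_fibers eqxx andbT; apply/negP/negPn/allP => _ /mapP [j _ ->].
have /existsP [v lv] := forallP l_surj j.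
by rewrite card_gt0; apply/set0Pn; exists v; rewrite inE.
Qed.

Definition nonzero_parts n (e : {ffun 'I_n -> nat}) : seq nat :=
  [seq e i | i <- enum 'I_n & e i != 0%N].

Lemma M_coefE alpha n (e : {ffun 'I_n -> nat}) :
  M_coef alpha e = (alpha == nonzero_parts e).
Proof. by rewrite /M_coef eq_sym; case: eqP. Qed.

Lemma support_enum n (e : {ffun 'I_n -> nat}) :
  exists sel : 'I_(size (nonzero_parts e)) -> 'I_n,
    [/\ {mono sel : j j' / (j < j')%N},
        forall i, (e i != 0%N) = (i \in codom sel) &
        [seq e (sel j) | j <- enum 'I_(size (nonzero_parts e))] = nonzero_parts e].
Proof.
rewrite /nonzero_parts; set S := [seq i <- enum 'I_n | e i != 0%N].
rewrite size_map.
have S_sorted : sorted (relpre val ltn) S.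
  apply: sorted_filter; first by move=> a b c /=; apply: ltn_trans.
  by rewrite -sorted_map val_enum_ord iota_ltn_sorted.
have sel_lt (j j' : 'I_(size S)) :
    (j < j')%N -> (tnth (in_tuple S) j < tnth (in_tuple S) j')%N.
  move=> jj'; have x0 : 'I_n := tnth (in_tuple S) j.
  have val_trans : transitive (relpre (@nat_of_ord n) ltn).
    by move=> b a c; apply: ltn_trans.
  by rewrite !(tnth_nth x0); apply: (sorted_ltn_nth val_trans x0 S_sorted);
    rewrite ?inE ?ltn_ord.
exists (tnth (in_tuple S)); split.
- move=> j j'; case: (ltngtP j j') => [jj'|j'j|/val_inj -> //]; first exact: sel_lt.
    by apply/negbTE; rewrite -leqNgt ltnW // sel_lt.
  by rewrite ltnn.
- move=> i; have -> : (i \in codom (tnth (in_tuple S))) = (i \in S).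
    by apply/codomP/(tnthP (in_tuple S)) => [[j ->]|[j ->]]; exists j.
  by rewrite mem_filter mem_enum andbT.
- by rewrite (map_comp e) map_tnth_enum.
Qed.

Lemma F_graph_coefE n (e : {ffun 'I_n -> nat}) :
  F_graph_coef G e = zeta G (nonzero_parts e).
Proof.
have [sel [sel_mono supp_e type_e]] := support_enum e.
rewrite /F_graph_coef /qs_coef (card_content_colorings G sel_mono supp_e).
apply: eq_card => l; rewrite !inE; case: (asb _) => //=.
case l_surj: [forall j, [exists v, l v == j]] => //=.
rewrite coloring_type_surj // -[X in _ == X]type_e.
apply/forallP/eqP => [fibers_l | /eq_in_map fibers_l j].
  by apply/eq_in_map => j _; apply/eqP/fibers_l.
by apply/eqP/fibers_l; rewrite mem_enum.
Qed.

End Zeta.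

Lemma leq_size_sumn (a : seq nat) : all (fun x => 0 < x)%N a -> (size a <= sumn a)%N.
Proof. by elim: a => //= x a IH /andP[x_gt0 /IH]; rewrite -add1n; apply: leq_add. Qed.

Lemma leq_mem_sumn (a : seq nat) x : x \in a -> (x <= sumn a)%N.
Proof.
elim: a => //= y a IH; rewrite in_cons => /orP[/eqP->|/IH]; first exact: leq_addr.
by move/leq_trans; apply; apply: leq_addl.
Qed.

(* Every composition of m is counted once, by the tuple of its parts. *)
Lemma sum_compositions_delta m a c (H : seq nat -> nat) :
  (forall b, H b = c * (b == a))%N ->
  sum_compositions m H = if is_composition m a then c else 0%N.
Proof.
move=> H_delta; rewrite /sum_compositions.
have H_val k (t : k.-tuple 'I_m.+1) : map val t != a -> H (map val t) = 0%N.
  by rewrite H_delta => /negbTE ->; rewrite muln0.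
case: (boolP (is_composition m a)) => [a_comp|a_ncomp] /=; last first.
  rewrite big1 // => k _; rewrite big1 // => t t_comp; apply: H_val.
  by apply: contraNneq a_ncomp => <-.
have /andP[a_pos /eqP a_sum] := a_comp.
have size_a : (size a < m.+1)%N by rewrite ltnS -a_sum leq_size_sumn.
have small_a x : x \in a -> (x < m.+1)%N by rewrite ltnS -a_sum; apply: leq_mem_sumn.
have size_inord : size (map (@inord m) a) == size a by rewrite size_map.
pose t0 : (size a).-tuple 'I_m.+1 := Tuple size_inord.
have t0_val : map val t0 = a.
  rewrite -map_comp -[RHS]map_id; apply/eq_in_map => x xa /=.
  by rewrite inordK // small_a.
rewrite (bigD1 (Ordinal size_a)) //= [X in _ + X]big1 ?addn0; last first.
  move=> k k_ne; apply: big1 => t _; apply: H_val; apply: contra_neq k_ne => t_a.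
  by apply: val_inj; rewrite /= -t_a size_map size_tuple.
rewrite (bigD1 t0) /= ?t0_val // H_delta eqxx muln1 big1 ?addn0 // => t /andP[_ t_ne].
apply: H_val; apply: contra_neq t_ne => t_a.
by apply/val_inj/(inj_map val_inj); rewrite /= t_a t0_val.
Qed.

Theorem mainTheorem9 (R : realFieldType) (V : finType) (G : rel V)
    (Gsym : symmetric G) (Girr : irreflexive G) :
  (forall (n : nat) (e : {ffun 'I_n -> nat}),
      @F_poly_coef R V (@graph_associahedron R V G) n e = @F_graph_coef V G n e)
  /\
  (forall (n : nat) (e : {ffun 'I_n -> nat}),
      @F_graph_coef V G n e =
      sum_compositions #|V| (fun alpha => zeta G alpha * @M_coef alpha n e)).
Proof.
split=> n e.
  apply: eq_card => g; rewrite !inE.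
  by rewrite (eq_asb (generic_graph_associahedron Gsym R _)).
rewrite F_graph_coefE.
rewrite (@sum_compositions_delta _ (nonzero_parts e) (zeta G (nonzero_parts e))).
  by case: ifP => // /negbT /zeta_eq0.
by move=> b; rewrite M_coefE; case: eqP => [->|]; rewrite ?muln0.
Qed.
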